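(* Let $(\widetilde{\mathbf{X}},Y)$ with $\widetilde{\mathbf{X}}\in\mathbb{R}^d$ satisfy $Y=\mu(\widetilde{\mathbf{X}})+\varepsilon$, where $\mu(\widetilde{\mathbf{X}})=\mathbb{E}[Y\mid\widetilde{\mathbf{X}}]$ and $\|\mu\|_\infty\le\mu_{max}<\infty$. Assume that conditionally on $\widetilde{\mathbf{X}}=\widetilde{\mathbf{x}}$, $\varepsilon$ is sub-Gaussian with Orlicz norm in $(0,s_{max}]$ and conditional variance at most $\sigma^2_{max}$, uniformly in $\widetilde{\mathbf{x}}$. Let $(\widetilde{\mathbf{x}}_\ell,y_\ell)_{\ell\le N}$ be i.i.d. copies. Assume there are constants $C_d>C_u>0$ and events $\mathcal{B}_N$ on $\widetilde{\mathbf{X}}^N=(\widetilde{\mathbf{x}}_1,\dots,\widetilde{\mathbf{x}}_N)$ with $\mathbb{P}(\mathcal{B}_N)\to1$, such that on $\mathcal{B}_N$, with $K_0=\lfloor\ln(N)/(2C_d+1)\rfloor$, the Gram eigenvalues satisfy $\sum_{k=K_0}^N\widehat\mu_k\le\sum_{k=K_0}^Ne^{-C_uk}$ and $\widehat\mu_{K_0}\ge e^{-C_dK_0}$. Let $\widehat f^{(m_{stop})}$ be the $L^2$-boosting estimate with $m_{stop}=N^{\frac14\frac{C_u+C_d+1/2}{C_d+1}}$. Then there exist $\delta>0$ and a function $h(N)\in o(N^{1/4-\delta})$ such that $$\mathbb{P}\Big(\big\{\|\widehat f^{(m_{stop})}\|_H>h(N)\big\}\cap\{\widetilde{\mathbf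{X}}^N\in\mathcal{B}_N\}\Big)\to0\qquad(N\to\infty).$$
   Context: $H=H_1\oplus\cdots\oplus H_d$ is the additive RKHS of Gaussian kernels $K_j(x,x')=\exp(-|x-x'|^2/(2\varsigma_j))$, with kernel $K=\sum_jK_j$. Gram matrix: $G_{ij}=K(\widetilde{\mathbf{x}}_i,\widetilde{\mathbf{x}}_j)/N$, with eigenvalues $\widehat\mu_1\ge\dots\ge\widehat\mu_N$; it is assumed invertible. Orlicz norm: $s(\varepsilon)=\inf\{r>0:\mathbb{E}[\exp(\varepsilon^2/r^2)]\le2\}$. Base learner: kernel ridge regression with fixed $\lambda>0$, fitting $\frac1{\sqrt N}\sum_\ell\beta_\ell K(\cdot,\widetilde{\mathbf{x}}_\ell)$ with $\beta=\frac1{\sqrt N}(G+\lambda I)^{-1}u$. $L^2$-boosting: $\widehat f^{(0)}=0$, and each step adds the base learner fit to the residuals. Fitted values after $m$ steps are $(I-(I-S)^m)y^N$ with $S=G(G+\lambda I)^{-1}$. *)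

From HB Require Import structures.
From mathcomp Require Import all_boot all_order all_algebra.
From mathcomp Require Import all_classical all_reals all_analysis.
Set Implicit Arguments. Unset Strict Implicit. Unset Printing Implicit Defensive.
Import Order.TTheory GRing.Theory Num.Theory.
Import numFieldNormedType.Exports.
Local Open Scope classical_set_scope.
Local Open Scope ring_scope.

Definition addK {R : realType} {d : nat} (vs : 'I_d -> R) (x x' : d.-tuple R) : R :=
  \sum_(j < d) expR (- (tnth x j - tnth x' j) ^+ 2 / (2 * vs j)).

Definition gram {R : realType} {d N : nat} (vs : 'I_d -> R)
    (xs : N.-tuple (d.-tuple R)) : 'M[R]_N :=
  \matrix_(i, j) (addK vs (tnth xs i) (tnth xs j) / N%:R).

(* A function f = sum_l c_l K(., x_l) is represented by its coefficient
   column vector c.  Kernel matrix (K(x_i,x_j))_{ij} = N * G. *)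
Definition kmat {R : realType} {d N : nat} (vs : 'I_d -> R)
    (xs : N.-tuple (d.-tuple R)) : 'M[R]_N :=
  \matrix_(i, j) addK vs (tnth xs i) (tnth xs j).

(* Base learner (kernel ridge regression with parameter lam) fitted to
   responses u: (1/sqrt N) sum_l beta_l K(., x_l), beta = (1/sqrt N)(G+lam I)^-1 u,
   i.e. coefficient vector c = beta / sqrt N. *)
Definition krr_coef {R : realType} {d N : nat} (vs : 'I_d -> R) (lam : R)
    (xs : N.-tuple (d.-tuple R)) (u : 'cV[R]_N) : 'cV[R]_N :=
  let sN := Num.sqrt (N%:R : R) in
  sN^-1 *: (sN^-1 *: (invmx (gram vs xs + lam%:M) *m u)).

Fixpoint boost_coef {R : realType} {d N : nat} (vs : 'I_d -> R) (lam : R)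
    (xs : N.-tuple (d.-tuple R)) (y : 'cV[R]_N) (m : nat) : 'cV[R]_N :=
  match m with
  | 0 => 0
  | m'.+1 =>
      let c := boost_coef vs lam xs y m' in
      c + krr_coef vs lam xs (y - kmat vs xs *m c)
  end.

Definition rkhs_norm {R : realType} {d N : nat} (vs : 'I_d -> R)
    (xs : N.-tuple (d.-tuple R)) (c : 'cV[R]_N) : R :=
  Num.sqrt ((c^T *m kmat vs xs *m c) ord0 ord0).

Definition orlicz_norm {R : realType} (Q : {measure set R -> \bar R}) : \bar R :=
  ereal_inf [set r%:E | r in [set r : R | 0 < r /\
     (\int[Q]_e (expR (e ^+ 2 / r ^+ 2))%:E <= 2%:E)%E]].

Definition mutually_independent {dO dT : measure_display} {R : realType}
    {Omega : measurableType dO} {T : measurableType dT}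
    (P : probability Omega R) (Z : nat -> Omega -> T) : Prop :=
  forall (I : seq nat) (A : nat -> set T),
    uniq I -> (forall i, i \in I -> measurable (A i)) ->
    P (\bigcap_(i in [set` I]) (Z i @^-1` A i)) =
    (\prod_(i <- I) P (Z i @^-1` A i))%E.

Definition sampleX {R : realType} {d : nat} {Omega : Type}
    (X : nat -> Omega -> d.-tuple R) (N : nat) (w : Omega) : N.-tuple (d.-tuple R) :=
  [tuple X (nat_of_ord i) w | i < N].

Definition sampleY {R : realType} {d : nat} {Omega : Type}
    (X : nat -> Omega -> d.-tuple R) (eps : nat -> Omega -> R)
    (mu : d.-tuple R -> R) (N : nat) (w : Omega) : 'cV[R]_N :=
  \col_(i < N) (mu (X i w) + eps i w).

(* A Gaussian kernel matrix K is positive semi-definite (expand [exp (c a_i a_k)] in its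
   power series: each term is a square).  Hence one boosting step
   [c |-> c + N^-1 (N^-1 K + lam)^-1 (y - K c)] raises the squared RKHS norm [c^T K c] by at
   most [|y|^2 / (lam N)] (Young's inequality), and after [m] steps
   [||f^(m)||_H <= sqrt (m / lam) * max_l |y_l|].  An Orlicz norm below [r] gives the tail bound
   [P (|eps| > t) <= 2 exp (- t^2 / r^2)]; with [t = r sqrt (2 ln N)] a union bound shows that
   all [N] noise values are at most [t] outside an event of probability [2 / N].  Off that
   event the norm is at most [h N = sqrt (m_stop / lam) (mu_max + t)], which is
   [o (N ^ (1/4 - delta))] because [m_stop <= N ^ a] with [a < 1/2].  The bound holds on the
   whole sample space. *)

From HB Require Import structures.
From mathcomp Require Import all_boot all_order all_algebra.
From mathcomp Require Import all_classical all_reals all_analysis.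
From mathcomp Require Import measurable_realfun ring lra.
Set Implicit Arguments. Unset Strict Implicit. Unset Printing Implicit Defensive.
Import Order.TTheory GRing.Theory Num.Theory.
Import numFieldNormedType.Exports.
Local Open Scope classical_set_scope.
Local Open Scope ring_scope.

Section GaussianKernel.
Variable R : realType.

Lemma expR_mul_kernel_psd n (w a : 'I_n -> R) (c : R) : 0 <= c ->
  0 <= \sum_i \sum_k w i * w k * expR (c * a i * a k).
Proof.
move=> c_ge0.
pose S m := \sum_i \sum_k w i * w k * series (exp_coeff (c * a i * a k)) m.
have S_cvg : S @ \oo --> \sum_i \sum_k w i * w k * expR (c * a i * a k).
  apply: cvg_big => [|i _]; first exact: add_continuous.
  apply: cvg_big => [|k _]; first exact: add_continuous.
  by apply: cvgM; [exact: cvg_cst | exact: is_cvg_series_exp_coeff].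
apply: (ler_cvg_to (cvg_cst 0) S_cvg); apply: nearW => m.
have -> : S m = \sum_(0 <= p < m) (p`!%:R)^-1 * c ^+ p * (\sum_i w i * a i ^+ p) ^+ 2.
  rewrite /S /series /=.
  under eq_bigr => i _ do under eq_bigr => k _ do rewrite big_distrr /=.
  under eq_bigr => i _ do rewrite exchange_big /=.
  rewrite exchange_big /=; apply: eq_bigr => p _.
  rewrite expr2 big_distrl mulr_sumr; apply: eq_bigr => i _.
  rewrite /= !mulr_sumr; apply: eq_bigr => k _.
  rewrite exp_coeffE /= !exprMn; ring.
apply: sumr_ge0 => p _; apply/mulr_ge0/sqr_ge0.
by rewrite mulr_ge0 ?exprn_ge0 ?invr_ge0.
Qed.

Lemma gauss_kernel_psd n (w a : 'I_n -> R) (s : R) : 0 < s ->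
  0 <= \sum_i \sum_k w i * w k * expR (- (a i - a k) ^+ 2 / (2 * s)).
Proof.
move=> s_gt0.
have := @expR_mul_kernel_psd n (fun i => w i * expR (- a i ^+ 2 / (2 * s))) a s^-1.
rewrite invr_ge0 ltW // => /(_ isT).
congr (_ <= _); apply: eq_bigr => i _; apply: eq_bigr => k _.
have -> : - (a i - a k) ^+ 2 / (2 * s) =
    - a i ^+ 2 / (2 * s) + - a k ^+ 2 / (2 * s) + s^-1 * a i * a k.
  by field; rewrite gt_eqF.
rewrite !expRD; ring.
Qed.

End GaussianKernel.

Lemma unitmx_ker0 (F : fieldType) n (A : 'M[F]_n) :
  (forall v : 'cV_n, A *m v = 0 -> v = 0) -> A \in unitmx.
Proof.
move=> A_inj; rewrite -unitmx_tr -row_free_unit -kermx_eq0.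
apply/eqP/row_matrixP => i; rewrite row0; apply: trmx_inj; rewrite trmx0.
by apply: A_inj; rewrite -[A in A *m _]trmxK -trmx_mul -row_mul mulmx_ker row0 trmx0.
Qed.

Section QuadraticForms.
Variables (R : realFieldType) (N : nat).
Implicit Types (u v w : 'cV[R]_N) (K : 'M[R]_N).

Definition dotv u v : R := (u^T *m v) 0 0.

Lemma dotvE u v : dotv u v = \sum_i u i 0 * v i 0.
Proof. by rewrite /dotv mxE; apply: eq_bigr => i _; rewrite mxE. Qed.

Lemma dotvC u v : dotv u v = dotv v u.
Proof. by rewrite !dotvE; apply: eq_bigr => i _; rewrite mulrC. Qed.

Lemma dotvDr w u v : dotv w (u + v) = dotv w u + dotv w v.
Proof. by rewrite /dotv mulmxDr mxE. Qed.

Lemma dotvBr w u v : dotv w (u - v) = dotv w u - dotv w v.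
Proof. by rewrite dotvDr /dotv mulmxN !mxE. Qed.

Lemma dotvZr a w u : dotv w (a *: u) = a * dotv w u.
Proof. by rewrite /dotv -scalemxAr mxE. Qed.

Lemma dotvDl w u v : dotv (u + v) w = dotv u w + dotv v w.
Proof. by rewrite dotvC dotvDr !(dotvC w). Qed.

Lemma dotvBl w u v : dotv (u - v) w = dotv u w - dotv v w.
Proof. by rewrite dotvC dotvBr !(dotvC w). Qed.

Lemma dotvZl a w u : dotv (a *: u) w = a * dotv u w.
Proof. by rewrite dotvC dotvZr dotvC. Qed.

Lemma dotv_ge0 u : 0 <= dotv u u.
Proof. by rewrite dotvE sumr_ge0 // => i _; rewrite -expr2 sqr_ge0. Qed.

Lemma dotv_eq0 u : (dotv u u == 0) = (u == 0).
Proof.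
apply/idP/eqP => [|->]; last by rewrite dotvE big1 // => i _; rewrite mxE mul0r.
rewrite dotvE psumr_eq0 => [/allP u0|i _]; last by rewrite -expr2 sqr_ge0.
apply/matrixP => i j; rewrite (ord1 j) mxE.
by apply/eqP; rewrite -sqrf_eq0 expr2; apply: u0; exact: mem_index_enum.
Qed.

Lemma dotv_mulmx K u v : dotv u (K *m v) = dotv (K^T *m u) v.
Proof. by rewrite /dotv trmx_mul trmxK mulmxA. Qed.

Definition psdmx K := forall u, 0 <= dotv u (K *m u).

Lemma psdmx_scale K a : 0 <= a -> psdmx K -> psdmx (a *: K).
Proof. by move=> a_ge0 K_psd u; rewrite -scalemxAl dotvZr mulr_ge0. Qed.

Lemma psdmx_add_scalar_unit K lam : psdmx K -> 0 < lam -> K + lam%:M \in unitmx.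
Proof.
move=> K_psd lam_gt0; apply: unitmx_ker0 => v Kv0; apply/eqP; rewrite -dotv_eq0.
have : dotv v ((K + lam%:M) *m v) = 0 by rewrite Kv0 /dotv mulmx0 mxE.
rewrite mulmxDl mul_scalar_mx dotvDr dotvZr => qf0.
have := K_psd v; have := dotv_ge0 v.
rewrite eq_le dotv_ge0 andbT; nra.
Qed.

Definition ridge_update K (n lam : R) (c y : 'cV[R]_N) : 'cV[R]_N :=
  c + n^-1 *: (invmx (n^-1 *: K + lam%:M) *m (y - K *m c)).

Lemma ridge_update_qf_le K (n lam : R) (c y : 'cV[R]_N) :
  K^T = K -> psdmx K -> 0 < n -> 0 < lam ->
  dotv (ridge_update K n lam c y) (K *m ridge_update K n lam c y)
    <= dotv c (K *m c) + dotv y y / (lam * n).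
Proof.
move=> K_sym K_psd n_gt0 lam_gt0; set c' := ridge_update K n lam c y.
set A := n^-1 *: K + lam%:M; set r := y - K *m c; set z := invmx A *m r.
set q := dotv z (K *m z).
have ninv_gt0 : 0 < n^-1 by rewrite invr_gt0.
have A_unit : A \in unitmx.
  by apply: psdmx_add_scalar_unit => //; apply: psdmx_scale => //; exact: ltW.
have zr : dotv z r = n^-1 * q + lam * dotv z z.
  by rewrite -[r](mulKVmx A_unit) mulmxDl mul_scalar_mx -scalemxAl dotvDr !dotvZr.
have zKc : dotv z (K *m c) = dotv z y - dotv z r by rewrite -dotvBr opprB addrC subrK.
have cKz : dotv c (K *m z) = dotv z (K *m c) by rewrite dotv_mulmx K_sym dotvC.
have qf_c' : dotv c' (K *m c') =
    dotv c (K *m c) + n^-1 * (2 * dotv z y - n^-1 * q - 2 * lam * dotv z z).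
  rewrite /c' /ridge_update -/A -/r -/z mulmxDr -scalemxAr.
  by rewrite !(dotvDl, dotvDr, dotvZl, dotvZr) cKz zKc zr -/q; ring.
have young : 2 * dotv z y <= dotv y y / lam + lam * dotv z z.
  have := dotv_ge0 (y - lam *: z).
  rewrite !(dotvBl, dotvBr, dotvZl, dotvZr) (dotvC y z) => sq_ge0.
  rewrite -(ler_pM2l lam_gt0) mulrDr [lam * (_ / lam)]mulrCA divff ?gt_eqF // mulr1; nra.
have -> : dotv y y / (lam * n) = n^-1 * (dotv y y / lam) by rewrite invfM; ring.
rewrite qf_c' lerD2l ler_pM2l //.
have := K_psd z; have := dotv_ge0 z; rewrite -/q; nra.
Qed.

End QuadraticForms.

Section Boosting.
Variables (R : realType) (d : nat) (vs : 'I_d -> R) (lam : R).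
Hypotheses (vs_gt0 : forall j, 0 < vs j) (lam_gt0 : 0 < lam).

Lemma kmat_sym N (xs : N.-tuple (d.-tuple R)) : (kmat vs xs)^T = kmat vs xs.
Proof.
apply/matrixP => i k; rewrite !mxE /addK; apply: eq_bigr => j _.
by rewrite -sqrrN opprB.
Qed.

Lemma kmat_psd N (xs : N.-tuple (d.-tuple R)) : psdmx (kmat vs xs).
Proof.
move=> u; rewrite dotvE.
have -> : \sum_i u i 0 * (kmat vs xs *m u) i 0 =
    \sum_j \sum_i \sum_k u i 0 * u k 0 *
      expR (- (tnth (tnth xs i) j - tnth (tnth xs k) j) ^+ 2 / (2 * vs j)).
  rewrite exchange_big /=; apply: eq_bigr => i _.
  rewrite mxE big_distrr /= exchange_big /=; apply: eq_bigr => k _.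
  by rewrite !mxE /addK big_distrl big_distrr /=; apply: eq_bigr => j _; ring.
by apply: sumr_ge0 => j _; exact: gauss_kernel_psd.
Qed.

Lemma gram_kmat N (xs : N.-tuple (d.-tuple R)) : gram vs xs = N%:R^-1 *: kmat vs xs.
Proof. by apply/matrixP => i k; rewrite !mxE mulrC. Qed.

Lemma boost_coefS N (xs : N.-tuple (d.-tuple R)) y m : (0 < N)%N ->
  boost_coef vs lam xs y m.+1 =
  ridge_update (kmat vs xs) N%:R lam (boost_coef vs lam xs y m) y.
Proof.
move=> N_gt0; rewrite /= /krr_coef /ridge_update gram_kmat scalerA -invfM.
by rewrite -expr2 sqr_sqrtr ?ler0n.
Qed.

Lemma boost_coef_qf_le N (xs : N.-tuple (d.-tuple R)) y m : (0 < N)%N ->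
  dotv (boost_coef vs lam xs y m) (kmat vs xs *m boost_coef vs lam xs y m)
    <= m%:R * (dotv y y / (lam * N%:R)).
Proof.
move=> N_gt0; elim: m => [|m IHm]; first by rewrite /= mulmx0 /dotv mulmx0 mxE mul0r.
rewrite boost_coefS //; apply: le_trans (ridge_update_qf_le _ _ _ _ _ _) _.
- exact: kmat_sym.
- exact: kmat_psd.
- by rewrite ltr0n.
- exact: lam_gt0.
- by rewrite -nat1r mulrDl mul1r addrC lerD2l.
Qed.

Lemma rkhs_norm_boost_le N (xs : N.-tuple (d.-tuple R)) (y : 'cV[R]_N) m (b : R) :
  (0 < N)%N -> 0 <= b -> (forall i, `|y i 0| <= b) ->
  rkhs_norm vs xs (boost_coef vs lam xs y m) <= Num.sqrt (m%:R / lam) * b.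
Proof.
move=> N_gt0 b_ge0 y_le_b.
have N_gtr0 : 0 < N%:R :> R by rewrite ltr0n.
have yy_le : dotv y y <= b ^+ 2 * N%:R.
  have -> : b ^+ 2 * N%:R = \sum_(i < N) b ^+ 2 by rewrite sumr_const card_ord mulr_natr.
  rewrite dotvE; apply: ler_sum => i _.
  by rewrite -expr2 -real_normK ?num_real // lerXn2r ?nnegrE.
have ml_ge0 : 0 <= m%:R / lam by rewrite divr_ge0 ?ler0n // ltW.
set c := boost_coef vs lam xs y m.
have qf_le : dotv c (kmat vs xs *m c) <= m%:R / lam * b ^+ 2.
  apply: le_trans (boost_coef_qf_le _ _ _ N_gt0) _.
  have -> : m%:R * (dotv y y / (lam * N%:R)) = m%:R / lam * (dotv y y / N%:R).
    by rewrite invfM; ring.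
  by rewrite ler_wpM2l // ler_pdivrMr.
have -> : rkhs_norm vs xs c = Num.sqrt (dotv c (kmat vs xs *m c)).
  by rewrite /rkhs_norm /dotv mulmxA.
by apply: le_trans (ler_wsqrtr qf_le) _; rewrite sqrtrM // sqrtr_sqr ger0_norm.
Qed.

End Boosting.

Lemma measurable_inv (R : realType) : measurable_fun [set: R] (fun x : R => x^-1).
Proof.
rewrite -(setvU [set 0]); apply/measurable_funU => //; first exact: measurableC.
split; last exact: measurable_fun_set1.
apply: open_continuous_measurable_fun => [|x /set_mem/eqP x_neq0].
  by rewrite openC; apply: compact_closed; [exact: Rhausdorff | exact: compact_set1].
exact: inv_continuous.
Qed.

Section MeasurableMatrices.
Context d (T : measurableType d) (R : realType).

Definition measurable_mx m n (F : T -> 'M[R]_(m, n)) :=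
  forall i j, measurable_fun setT (fun w => F w i j).

Lemma measurable_mx_cst m n (A : 'M[R]_(m, n)) : measurable_mx (fun=> A).
Proof. by []. Qed.

Lemma measurable_mxD m n (F G : T -> 'M[R]_(m, n)) :
  measurable_mx F -> measurable_mx G -> measurable_mx (fun w => F w + G w).
Proof. by move=> mF mG i j; under eq_fun do rewrite mxE; exact: measurable_funD. Qed.

Lemma measurable_mxN m n (F : T -> 'M[R]_(m, n)) :
  measurable_mx F -> measurable_mx (fun w => - F w).
Proof. by move=> mF i j; under eq_fun do rewrite mxE; exact: measurable_funN. Qed.

Lemma measurable_mxZ m n (a : T -> R) (F : T -> 'M[R]_(m, n)) :
  measurable_fun setT a -> measurable_mx F -> measurable_mx (fun w => a w *: F w).
Proof. by move=> ma mF i j; under eq_fun do rewrite mxE; exact: measurable_funM. Qed.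

Lemma measurable_mxM m n p (F : T -> 'M[R]_(m, n)) (G : T -> 'M[R]_(n, p)) :
  measurable_mx F -> measurable_mx G -> measurable_mx (fun w => F w *m G w).
Proof.
move=> mF mG i j; under eq_fun do rewrite mxE.
by apply: measurable_sum => k; exact: measurable_funM.
Qed.

Lemma measurable_mx_tr m n (F : T -> 'M[R]_(m, n)) :
  measurable_mx F -> measurable_mx (fun w => (F w)^T).
Proof. by move=> mF i j; under eq_fun do rewrite mxE; exact: mF. Qed.

Lemma measurable_det n (F : T -> 'M[R]_n) :
  measurable_mx F -> measurable_fun setT (fun w => \det (F w)).
Proof.
move=> mF; rewrite /determinant; apply: measurable_sum => s.
apply: measurable_funM => //.
by apply: measurable_prod => i _; exact: mF.
Qed.

Lemma measurable_mx_adj n (F : T -> 'M[R]_n) :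
  measurable_mx F -> measurable_mx (fun w => \adj (F w)).
Proof.
move=> mF i j; under eq_fun do rewrite mxE /cofactor.
apply: measurable_funM => //; apply: measurable_det => a b.
by under eq_fun do rewrite !mxE; exact: mF.
Qed.

Lemma measurable_invmx n (F : T -> 'M[R]_n) :
  measurable_mx F -> (forall w, F w \in unitmx) -> measurable_mx (fun w => invmx (F w)).
Proof.
move=> mF F_unit; have -> : (fun w => invmx (F w)) = (fun w => (\det (F w))^-1 *: \adj (F w)).
  by apply: funext => w; rewrite /invmx F_unit.
apply: measurable_mxZ; last exact: measurable_mx_adj.
exact: measurableT_comp (@measurable_inv R) (measurable_det mF).
Qed.

End MeasurableMatrices.

Lemma measurable_abs_gt (R : realType) (t : R) : measurable [set e : R | t < `|e|].
Proof.
have := @normr_measurable R setT measurableT _ (measurable_itv `]t, +oo[).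
by rewrite setTI; congr measurable; apply/seteqP; split => e /=; rewrite in_itv /= andbT.
Qed.

(* Markov's inequality for [exp (e^2 / r'^2)], with [r' < r] a radius from the infimum
   defining the Orlicz norm. *)
Lemma orlicz_tail_le (R : realType) (Q : {measure set R -> \bar R}) (r t : R) :
  0 <= t -> (orlicz_norm Q < r%:E)%E ->
  (Q [set e | (t < `|e|)%R] <= (2 * expR (- (t ^+ 2 / r ^+ 2)))%:E)%E.
Proof.
move=> t_ge0 /ereal_inf_lt[_ [r' [r'_gt0 int_le2] <-]]; rewrite lte_fin => r'_lt_r.
set E := [set e : R | t < `|e|]; set c := expR (t ^+ 2 / r' ^+ 2).
have c_gt0 : 0 < c := expR_gt0 _.
have mexp : measurable_fun setT (fun e : R => (expR (e ^+ 2 / r' ^+ 2))%:E).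
  apply/measurable_EFinP; apply: measurableT_comp => //.
  by apply: measurable_funM => //; exact: measurable_funX.
have mE : measurable E := measurable_abs_gt t.
have cQE_le2 : (c%:E * Q E <= 2%:E)%E.
  rewrite -(integral_cst Q mE); apply: le_trans int_le2.
  have : (\int[Q]_(e in E) (expR (e ^+ 2 / r' ^+ 2))%:E <=
          \int[Q]_e (expR (e ^+ 2 / r' ^+ 2))%:E)%E.
    apply: ge0_subset_integral => //; by move=> e _; rewrite lee_fin expR_ge0.
  apply: le_trans; apply: ge0_le_integral => //; [by move=> e _; rewrite lee_fin ltW |
    exact: measurable_funS mexp | move=> e /= t_lt_e].
  rewrite lee_fin ler_expR ler_pM2r ?invr_gt0 ?exprn_gt0 //.
  rewrite -[e ^+ 2]real_normK ?num_real //.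
  by apply: lerXn2r; rewrite ?nnegrE //; exact: ltW.
apply: le_trans (_ : ((c^-1 * 2)%:E <= _)%E).
  by rewrite EFinM lee_pdivlMl.
have r_gt0 : 0 < r := lt_trans r'_gt0 r'_lt_r.
rewrite lee_fin mulrC ler_pM2l // /c -expRN ler_expR lerN2 ler_wpM2l ?sqr_ge0 //.
rewrite lef_pV2 ?posrE ?exprn_gt0 //.
by apply: lerXn2r; rewrite ?nnegrE ?ltW.
Qed.

Section Sample.
Context dO (Omega : measurableType dO) (R : realType) (P : probability Omega R)
  (d : nat) (vs : 'I_d -> R) (lam : R) (mu : d.-tuple R -> R) (mu_max r : R)
  (PX : probability (d.-tuple R) R) (kappa : R.-pker (d.-tuple R) ~> R)
  (X : nat -> Omega -> d.-tuple R) (eps : nat -> Omega -> R).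
Hypotheses (vs_gt0 : forall j, 0 < vs j) (lam_gt0 : 0 < lam).
Hypotheses (mmu : measurable_fun setT mu) (mX : forall l, measurable_fun setT (X l))
  (meps : forall l, measurable_fun setT (eps l)).
Hypothesis mu_le : forall x, `|mu x| <= mu_max.
Hypothesis law_Xeps : forall l (A : set (d.-tuple R)) (E : set R),
  measurable A -> measurable E ->
  P (X l @^-1` A `&` eps l @^-1` E) = (\int[PX]_(x in A) kappa x E)%E.
Hypothesis orlicz_lt : forall x, (orlicz_norm (kappa x) < r%:E)%E.

Lemma measurable_sampleX N : measurable_fun setT (sampleX X N).
Proof.
apply/measurable_fun_tnthP => i; rewrite (_ : _ \o _ = X i) //.
by apply: funext => w; rewrite /= tnth_mktuple.
Qed.

Lemma measurable_sampleY N : measurable_mx (sampleY X eps mu N).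
Proof.
move=> i k; under eq_fun do rewrite mxE.
exact: measurable_funD (measurableT_comp mmu (mX i)) (meps i).
Qed.

Lemma measurable_kmat_sample N : measurable_mx (fun w => kmat vs (sampleX X N w)).
Proof.
have mcoord l j : measurable_fun setT (fun w => tnth (X l w) j).
  exact: measurableT_comp (measurable_tnth j) (mX l).
move=> i k; under eq_fun do rewrite mxE /sampleX !tnth_mktuple /addK.
apply: measurable_sum => j; apply: measurableT_comp => //.
apply: measurable_funM => //; apply/measurable_funN/measurable_funX.
exact: measurable_funB.
Qed.

Lemma measurable_boost_coef N m : (0 < N)%N ->
  measurable_mx (fun w => boost_coef vs lam (sampleX X N w) (sampleY X eps mu N w) m).
Proof.
move=> N_gt0; elim: m => [|m IHm]; first exact: measurable_mx_cst.
under eq_fun do rewrite boost_coefS //.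
have mK := @measurable_kmat_sample N.
apply: measurable_mxD => //; apply: measurable_mxZ => //.
apply: measurable_mxM; last first.
  by apply: measurable_mxD; [exact: measurable_sampleY | exact/measurable_mxN/measurable_mxM].
apply: measurable_invmx => [|w].
  by apply: measurable_mxD => //; apply: measurable_mxZ.
apply: psdmx_add_scalar_unit => //; apply: psdmx_scale; last exact: kmat_psd.
by rewrite invr_ge0 ler0n.
Qed.

Lemma measurable_rkhs_norm_boost N m : (0 < N)%N ->
  measurable_fun setT (fun w => rkhs_norm vs (sampleX X N w)
    (boost_coef vs lam (sampleX X N w) (sampleY X eps mu N w) m)).
Proof.
move=> N_gt0; apply: measurableT_comp.
  by apply: continuous_measurable_fun; exact: sqrt_continuous.
have mc := measurable_boost_coef m N_gt0.
apply: measurable_mxM => //; apply: measurable_mxM; first exact: measurable_mx_tr.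
exact: measurable_kmat_sample.
Qed.

Lemma noise_tail_le l (t : R) : 0 <= t ->
  (P (eps l @^-1` [set e | (t < `|e|)%R]) <= (2 * expR (- (t ^+ 2 / r ^+ 2)))%:E)%E.
Proof.
move=> t_ge0; have mE := measurable_abs_gt t.
rewrite -[eps l @^-1` _]setTI -(preimage_setT (X l)) law_Xeps //.
apply: le_trans (_ : (\int[PX]_(x in setT) (cst (2 * expR (- (t ^+ 2 / r ^+ 2)))%:E) x <= _)%E).
  apply: ge0_le_integral => //; first exact: measurable_kernel.
  by move=> x _; exact: orlicz_tail_le.
rewrite integral_cst //; set PXT := (X in (_ * X)%E).
by rewrite (_ : PXT = 1%E) ?mule1 //; exact: probability_setT.
Qed.

Lemma noise_union_tail_le N (t : R) (A : set Omega) : 0 <= t -> measurable A ->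
  A `<=` \big[setU/set0]_(i < N) (eps i @^-1` [set e | t < `|e|]) ->
  (P A <= (N%:R * (2 * expR (- (t ^+ 2 / r ^+ 2))))%:E)%E.
Proof.
move=> t_ge0 mA A_sub; have mtail l : measurable (eps l @^-1` [set e | t < `|e|]).
  by rewrite -[_ @^-1` _]setTI; apply: meps => //; exact: measurable_abs_gt.
apply: le_trans (@content_subadditive _ _ _ P A _ N (fun i _ => mtail i) mA A_sub) _.
apply: le_trans; first by apply: lee_sum => i _; exact: noise_tail_le.
by rewrite sumEFin lee_fin sumr_const card_ord [leRHS]mulr_natl.
Qed.

Lemma prob_rkhs_norm_boost_gt_le N m (t : R) (A : set Omega) :
  (0 < N)%N -> 0 <= t -> measurable A ->
  (P ([set w | (Num.sqrt (m%:R / lam) * (mu_max + t) < rkhs_norm vs (sampleX X N w)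
        (boost_coef vs lam (sampleX X N w) (sampleY X eps mu N w) m))%R] `&` A)
    <= (N%:R * (2 * expR (- (t ^+ 2 / r ^+ 2))))%:E)%E.
Proof.
move=> N_gt0 t_ge0 mA; apply: noise_union_tail_le => //.
  apply: measurableI => //.
  have := measurable_rkhs_norm_boost m N_gt0 measurableT
    (measurable_itv `](Num.sqrt (m%:R / lam) * (mu_max + t)), +oo[).
  by rewrite setTI; congr measurable; apply/seteqP; split => w /=; rewrite in_itv /= andbT.
move=> w [/= norm_gt _]; apply: contrapT => no_tail.
have eps_le (i : 'I_N) : `|eps i w| <= t.
  rewrite leNgt; apply/negP => tail_i; apply: no_tail.
  exact: (bigsetU_sup (F := fun i => eps i @^-1` [set e | t < `|e|]) (ltn_ord i) tail_i).
have mu_max_ge0 : 0 <= mu_max := le_trans (normr_ge0 _) (mu_le [tuple of nseq d 0]).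
move: norm_gt; apply/negP; rewrite -leNgt.
apply: rkhs_norm_boost_le => // [|i]; first exact: addr_ge0.
by rewrite mxE; apply: (le_trans (ler_normD _ _)); exact: lerD.
Qed.

End Sample.

Section Asymptotics.
Variable R : realType.

Lemma natpowR_cvgy (k : R) : 0 < k -> (fun N : nat => (N%:R : R) `^ k) @ \oo --> +oo.
Proof.
move=> k_gt0; apply/cvgryPge => A; exists (Num.truncn (`|A| `^ k^-1)).+1 => // N /= N_gt.
have A_le : `|A| `^ k^-1 <= N%:R.
  have /andP[_ /ltW lt_trunc] := truncn_itv (powR_ge0 `|A| k^-1).
  by apply: le_trans lt_trunc _; rewrite ler_nat.
apply: le_trans (ler_norm A) _.
have -> : `|A| = (`|A| `^ k^-1) `^ k by rewrite -powRrM mulVf ?gt_eqF // powRr1.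
by apply: ge0_ler_powR; rewrite ?nnegrE ?powR_ge0 ?ler0n // ltW.
Qed.

Lemma natpowRV_cvg0 (k : R) : 0 < k ->
  (fun N : nat => ((N%:R : R) `^ k)^-1) @ \oo --> 0.
Proof.
move=> k_gt0; apply/gtr0_cvgV0; last exact: natpowR_cvgy.
by exists 1%N => // N /= N_ge1; rewrite powR_gt0 // ltr0n.
Qed.

Lemma sqrt_truncn_powR_le (x a lam : R) : 0 <= x -> 0 < lam ->
  Num.sqrt ((Num.truncn (x `^ a))%:R / lam) <= x `^ (a / 2) / Num.sqrt lam.
Proof.
move=> x_ge0 lam_gt0; have xa_ge0 := powR_ge0 x a; have lam_ge0 := ltW lam_gt0.
rewrite powRrM powR12_sqrt // -sqrtrV // -sqrtrM //.
rewrite ler_sqrt ?mulr_ge0 ?invr_ge0 // ler_pM2r ?invr_gt0 //.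
by have /andP[] := truncn_itv xa_ge0.
Qed.

Lemma sqrt_ln_le_powR (x e : R) : 0 < x -> 0 < e ->
  Num.sqrt (2 * ln x) <= Num.sqrt (2 / e) * x `^ (e / 2).
Proof.
move=> x_gt0 e_gt0; have xe_gt0 := powR_gt0 e x_gt0; have e_ge0 := ltW e_gt0.
have ln_le : ln x <= x `^ e / e.
  rewrite ler_pdivlMr //; have := ln_sublinear xe_gt0.
  by rewrite ln_powR mulrC => /ltW.
rewrite powRrM powR12_sqrt ?(ltW xe_gt0) // -sqrtrM ?divr_ge0 //.
rewrite ler_sqrt ?mulr_ge0 ?invr_ge0 ?(ltW xe_gt0) //.
by rewrite mulrAC -mulrA ler_pM2l // mulrC.
Qed.

Lemma threshold_cvg0 (lam mu_max r a : R) :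
  0 < lam -> 0 <= mu_max -> 0 <= r -> 0 <= a -> a < 2^-1 ->
  (fun N : nat => Num.sqrt ((Num.truncn ((N%:R : R) `^ a))%:R / lam) *
     (mu_max + r * Num.sqrt (2 * ln (N%:R : R))) /
     (N%:R : R) `^ (4^-1 - (4^-1 - a / 2) / 2)) @ \oo --> 0.
Proof.
move=> lam_gt0 mu_ge0 r_ge0 a_ge0 a_lt; set e := (4^-1 - a / 2) / 2.
have e_gt0 : 0 < e by rewrite /e; lra.
have e2_gt0 : 0 < e / 2 by rewrite divr_gt0.
set sl := Num.sqrt lam; have sl_gt0 : 0 < sl by rewrite sqrtr_gt0.
set c := Num.sqrt (2 / e).
pose U (N : nat) := sl^-1 * (mu_max * ((N%:R : R) `^ e)^-1 +
                             r * c * ((N%:R : R) `^ (e / 2))^-1).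
have U_cvg0 : U @ \oo --> sl^-1 * (mu_max * 0 + r * c * 0).
  apply: cvgM; first exact: cvg_cst.
  by apply: cvgD; apply: cvgM; [exact: cvg_cst | exact: natpowRV_cvg0 | exact: cvg_cst |
    exact: natpowRV_cvg0].
rewrite !mulr0 addr0 mulr0 in U_cvg0.
apply: (@squeeze_cvgr _ _ _ _ (fun=> 0) U) U_cvg0 => //; last exact: cvg_cst.
exists 1%N => // N /= N_ge1; set n := N%:R : R.
have n_gt0 : 0 < n by rewrite ltr0n.
have n_neq0 : n != 0 := lt0r_neq0 n_gt0.
set p := n `^ (a / 2); set q := n `^ (e / 2).
have [p_gt0 q_gt0] : 0 < p /\ 0 < q by split; apply: powR_gt0.
have exp_split : n `^ (4^-1 - e) = p * (q * q).
  by rewrite -!powRD ?n_neq0 ?implybT //; apply: f_equal; rewrite /e; lra.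
have e_split : n `^ e = q * q by rewrite -powRD ?n_neq0 ?implybT // -splitr.
have S_le := sqrt_truncn_powR_le a (ltW n_gt0) lam_gt0.
have L_le := sqrt_ln_le_powR n_gt0 e_gt0.
rewrite exp_split /U -/n e_split -/q; apply/andP; split.
  by rewrite divr_ge0 ?mulr_ge0 ?addr_ge0 ?sqrtr_ge0 ?mulr_ge0 // ltW.
rewrite ler_pdivrMr ?mulr_gt0 //.
have -> : sl^-1 * (mu_max / (q * q) + r * c / q) * (p * (q * q)) =
    p / sl * (mu_max + r * (c * q)) by field; rewrite !gt_eqF.
by rewrite ler_pM ?sqrtr_ge0 ?addr_ge0 ?mulr_ge0 ?sqrtr_ge0 // lerD2l ler_wpM2l.
Qed.

Lemma union_tail_at_sqrt_ln (n r : R) : 1 <= n -> 0 < r ->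
  n * (2 * expR (- ((r * Num.sqrt (2 * ln n)) ^+ 2 / r ^+ 2))) = 2 / n.
Proof.
move=> n_ge1 r_gt0; have n_gt0 : 0 < n := lt_le_trans ltr01 n_ge1.
rewrite exprMn sqr_sqrtr ?mulr_ge0 ?ln_ge0 // mulrAC divff ?gt_eqF ?exprn_gt0 //.
have -> : 2 * ln n = ln n + ln n by ring.
by rewrite mul1r expRN expRD lnK ?posrE //; field; rewrite gt_eqF.
Qed.

Lemma natrV_cvg0 : (fun N : nat => (N%:R : R)^-1) @ \oo --> 0.
Proof.
apply/gtr0_cvgV0; last exact: cvgr_idn.
by exists 1%N => // N /= N_ge1; rewrite ltr0n.
Qed.

End Asymptotics.

Unset Implicit Arguments.

Theorem lemma5
  (R : realType) (dO : measure_display) (Omega : measurableType dO)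
  (P : probability Omega R)
  (d : nat) (vs : 'I_d -> R) (lam : R)
  (mu : d.-tuple R -> R) (mu_max s_max sigma2_max : R)
  (PX : probability (d.-tuple R) R) (kappa : R.-pker (d.-tuple R) ~> R)
  (X : nat -> Omega -> d.-tuple R) (eps : nat -> Omega -> R)
  (Cu Cd : R) (B : forall N : nat, set (N.-tuple (d.-tuple R))) :
  (forall j, 0 < vs j) -> 0 < lam ->
  (* regression function: bounded, measurable *)
  measurable_fun setT mu -> (forall x, `|mu x| <= mu_max) ->
  (* sample: (X_l, eps_l) measurable, i.i.d., with law
     P(X_l in A, eps_l in E) = int_A kappa x E dPX(x);  Y_l = mu(X_l) + eps_l *)
  (forall l, measurable_fun setT (X l)) -> (forall l, measurable_fun setT (eps l)) ->
  (forall l (A : set (d.-tuple R)) (E : set R), measurable A -> measurable E ->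
     P (X l @^-1` A `&` eps l @^-1` E) = (\int[PX]_(x in A) kappa x E)%E) ->
  mutually_independent P (fun l w => (X l w, eps l w)) ->
  (* conditional on X = x: E[eps | X = x] = 0 (i.e. mu = E[Y|X]),
     Var(eps | X = x) <= sigma2_max, Orlicz norm in (0, s_max] *)
  (forall x, (kappa x).-integrable setT (fun e => e%:E) /\
             (\int[kappa x]_e e%:E = 0)%E) ->
  (forall x, (\int[kappa x]_e (e ^+ 2)%:E <= sigma2_max%:E)%E) ->
  (forall x, (0 < orlicz_norm (kappa x))%E /\ (orlicz_norm (kappa x) <= s_max%:E)%E) ->
  (* Gram matrix invertible (almost surely) *)
  (forall N : nat, {ae P, forall w, gram vs (sampleX X N w) \in unitmx}) ->
  (* events B_N on X^N *)
  0 < Cu -> Cu < Cd ->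
  (forall N, measurable (B N)) ->
  (fun N => P [set w | B N (sampleX X N w)]) @ \oo --> 1%E ->
  (forall (N : nat) (xs : N.-tuple (d.-tuple R)), B N xs ->
     let K0 := Num.truncn (ln (N%:R : R) / (2 * Cd + 1)) in
     (1 <= K0)%N ->
     forall ev : 'I_N -> R,
       (forall i j : 'I_N, (i <= j)%N -> ev j <= ev i) ->
       char_poly (gram vs xs) = \prod_(i < N) ('X - (ev i)%:P) ->
       (\sum_(i < N | (K0 <= i.+1)%N) ev i
          <= \sum_(i < N | (K0 <= i.+1)%N) expR (- Cu * (i.+1)%:R))
       /\ (forall i : 'I_N, i.+1 = K0 -> expR (- Cd * K0%:R) <= ev i)) ->
  let m_stop (N : nat) : nat :=
    Num.truncn ((N%:R : R) `^ (4^-1 * (Cu + Cd + 2^-1) / (Cd + 1))) in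
  exists delta : R, 0 < delta /\
  exists h : nat -> R,
    (fun N => h N / (N%:R : R) `^ (4^-1 - delta)) @ \oo --> (0 : R) /\
    (fun N => P ([set w | h N < rkhs_norm vs (sampleX X N w)
                     (boost_coef vs lam (sampleX X N w) (sampleY X eps mu N w) (m_stop N))]
                 `&` [set w | B N (sampleX X N w)])) @ \oo --> 0%E.
Proof.
move=> vs_gt0 lam_gt0 mmu mu_le mX meps law_Xeps _ _ _ orlicz_bd _ Cu_gt0 Cu_lt_Cd mB _ _.
move=> m_stop.
set a := 4^-1 * (Cu + Cd + 2^-1) / (Cd + 1).
have a_ge0 : 0 <= a by rewrite /a divr_ge0 //; lra.
have a_lt : a < 2^-1 by rewrite /a ltr_pdivrMr; lra.
exists ((4^-1 - a / 2) / 2); split; first lra.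
have mu_max_ge0 : 0 <= mu_max := le_trans (normr_ge0 _) (mu_le [tuple of nseq d 0]).
set r := s_max + 1.
have orlicz_lt x : (orlicz_norm (kappa x) < r%:E)%E.
  by apply: le_lt_trans (orlicz_bd x).2 _; rewrite lte_fin ltrDl.
have r_gt0 : 0 < r.
  by rewrite -lte_fin; apply: lt_trans (orlicz_lt [tuple of nseq d 0]); exact: (orlicz_bd _).1.
exists (fun N => Num.sqrt ((m_stop N)%:R / lam) * (mu_max + r * Num.sqrt (2 * ln (N%:R : R)))).
split; first exact: threshold_cvg0 (ltW r_gt0) a_ge0 a_lt.
apply: (@squeeze_cvge _ _ _ _ (fun=> 0%E) _ (fun N => (2 / N%:R)%:E)); last 2 first.
- exact: cvg_cst.
- apply: cvg_EFin; first exact: nearW.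
  by rewrite -(mulr0 2); apply: cvgM; [exact: cvg_cst | exact: natrV_cvg0].
exists 1%N => // N /= N_ge1; rewrite measure_ge0 /=.
have mB' : measurable [set w | B N (sampleX X N w)].
  rewrite -[X in measurable X]setTI.
  exact: measurable_sampleX mX N measurableT _ (mB N).
rewrite -(union_tail_at_sqrt_ln (n := N%:R) _ r_gt0) ?ler1n //.
apply: (prob_rkhs_norm_boost_gt_le vs_gt0 lam_gt0 mmu mX meps mu_le law_Xeps orlicz_lt) => //.
by rewrite mulr_ge0 ?sqrtr_ge0 // ltW.
Qed.
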